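(* Let $a>0$, $T>0$ and $\phi\in\mathcal D[0,T]$. If $(r,g)\in\Pi(\phi)$, then $(r,\Lambda_a(g))\in\Pi(\Lambda_a(\phi))$.
   Context: $\mathcal D[0,T]$ is the space of right-continuous functions $[0,T]\to\mathbb R$ with left limits. $x^+=\max(x,0)$, $\wedge=\min$, $\vee=\max$. For $a>0$ and a real function $f$ on an interval $[0,S]$, $\Lambda_a(f)(t)=f(t)-\sup_{s\in[0,t]}\big[(f(s)-a)^+\wedge\inf_{u\in[s,t]}f(u)\big]$, $t\in[0,S]$. For $\phi\in\mathcal D[0,T]$, set $\phi(0-)=\phi(0)$ and let $G_\phi=\{(t,z)\in[0,T]\times\mathbb R:z\in[\phi(t-)\wedge\phi(t),\phi(t-)\vee\phi(t)]\}$, ordered by $(t_1,z_1)\le(t_2,z_2)$ iff either $t_1<t_2$, or $t_1=t_2$ and $|\phi(t_1-)-z_1|\le|\phi(t_1-)-z_2|$. $\Pi(\phi)$ is the set of continuous maps $(r,g):[0,1]\to G_\phi$ that are onto $G_\phi$ and nondecreasing with respect to this order. *)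

From Stdlib Require Import Reals Lra Classical ClassicalEpsilon.
Open Scope R_scope.

(* Supremum of a set of reals (chosen least upper bound; 0 if none exists). *)
Definition sup_R (E : R -> Prop) : R :=
  match excluded_middle_informative (exists l, is_lub E l) with
  | left H => proj1_sig (constructive_indefinite_description _ H)
  | right _ => 0
  end.

Definition inf_R (E : R -> Prop) : R := - sup_R (fun x => E (- x)).

Definition Lambda (a : R) (f : R -> R) (t : R) : R :=
  f t - sup_R (fun y => exists s, 0 <= s <= t /\
        y = Rmin (Rmax (f s - a) 0) (inf_R (fun z => exists u, s <= u <= t /\ z = f u))).

Definition is_left_lim (phi : R -> R) (t l : R) : Prop :=
  forall eps, eps > 0 -> exists del, del > 0 /\
    forall s, t - del < s < t -> Rabs (phi s - l) < eps.

Definition right_cont_at (T : R) (phi : R -> R) (t : R) : Prop :=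
  forall eps, eps > 0 -> exists del, del > 0 /\
    forall s, t <= s <= T -> s < t + del -> Rabs (phi s - phi t) < eps.

Definition cadlag (T : R) (phi : R -> R) : Prop :=
  (forall t, 0 <= t < T -> right_cont_at T phi t) /\
  (forall t, 0 < t <= T -> exists l, is_left_lim phi t l).

(* phi(t-), with the convention phi(0-) = phi(0) *)
Definition left_val (phi : R -> R) (t : R) : R :=
  if Req_EM_T t 0 then phi 0 else
  match excluded_middle_informative (exists l, is_left_lim phi t l) with
  | left H => proj1_sig (constructive_indefinite_description _ H)
  | right _ => phi t
  end.

Definition in_G (T : R) (phi : R -> R) (t z : R) : Prop :=
  0 <= t <= T /\
  Rmin (left_val phi t) (phi t) <= z <= Rmax (left_val phi t) (phi t).

Definition G_le (phi : R -> R) (t1 z1 t2 z2 : R) : Prop :=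
  t1 < t2 \/
  (t1 = t2 /\ Rabs (left_val phi t1 - z1) <= Rabs (left_val phi t1 - z2)).

Definition cont_01 (f : R -> R) : Prop :=
  forall s, 0 <= s <= 1 -> forall eps, eps > 0 -> exists del, del > 0 /\
    forall s', 0 <= s' <= 1 -> Rabs (s' - s) < del -> Rabs (f s' - f s) < eps.

Definition in_Pi (T : R) (phi : R -> R) (r g : R -> R) : Prop :=
  cont_01 r /\ cont_01 g /\
  (forall s, 0 <= s <= 1 -> in_G T phi (r s) (g s)) /\
  (forall t z, in_G T phi t z -> exists s, 0 <= s <= 1 /\ r s = t /\ g s = z) /\
  (forall s1 s2, 0 <= s1 <= 1 -> 0 <= s2 <= 1 -> s1 <= s2 ->
     G_le phi (r s1) (g s1) (r s2) (g s2)).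

(* Write Λ_a f t = f t - C_a f t, where the correction C_a f t is the supremum
   over s ∈ [0,t] of the candidates min ((f s - a)^+, inf_[s,t] f).
   1. Comparison estimates for C_a (section [Correction]): if f stays above
      (below) a level on [s1,s2], the correction cannot fall (rise) past it.
      Hence Λ_a f rises up to a running maximum and falls down to a running
      minimum of f, C_a f oscillates no more than f, and Λ_a g is continuous.
   2. Key identity (section [KeyIdentity]): where r s = t and g s = φ t,
      C_a φ t = C_a g s, hence Λ_a φ t = Λ_a g s.
   3. On the fibre {r = t}, g runs monotonically from φ(t-) to φ t, so by 1.
      Λ_a g runs monotonically from its value at the first parameter of the
      fibre, which by continuity and 2. is (Λ_a φ)(t-), to Λ_a φ t (section
      [LambdaRepresentation]).  This yields graph membership and the order
      property, and surjectivity by the intermediate value theorem. *)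

From Stdlib Require Import Reals Lra ClassicalEpsilon.
Open Scope R_scope.

Ltac minmax := unfold Rmax, Rmin in *; repeat destruct Rle_dec; try lra.
Ltac absolute := unfold Rabs in *; repeat destruct Rcase_abs; try lra.

Lemma sup_R_is_lub (E : R -> Prop) (b : R) :
  (exists x, E x) -> (forall x, E x -> x <= b) -> is_lub E (sup_R E).
Proof.
  intros Hne Hb. unfold sup_R.
  destruct (excluded_middle_informative (exists l, is_lub E l)) as [H|H].
  - exact (proj2_sig (constructive_indefinite_description _ H)).
  - exfalso. apply H. destruct (completeness E) as [m Hm].
    + exists b. intros x Hx. now apply Hb.
    + exact Hne.
    + now exists m.
Qed.

Lemma sup_R_upper (E : R -> Prop) (b x : R) :
  (forall y, E y -> y <= b) -> E x -> x <= sup_R E.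
Proof.
  intros Hb Hx. destruct (sup_R_is_lub E b (ex_intro _ x Hx) Hb) as [H _]. now apply H.
Qed.

Lemma sup_R_least (E : R -> Prop) (c x : R) :
  E x -> (forall y, E y -> y <= c) -> sup_R E <= c.
Proof.
  intros Hx Hb. destruct (sup_R_is_lub E c (ex_intro _ x Hx) Hb) as [_ H].
  apply H. intros y Hy. now apply Hb.
Qed.

Lemma inf_R_lower (E : R -> Prop) (b x : R) :
  (forall y, E y -> b <= y) -> E x -> inf_R E <= x.
Proof.
  intros Hb Hx. unfold inf_R.
  assert (- x <= sup_R (fun z => E (- z))); [|lra].
  apply (sup_R_upper _ (- b)).
  - intros y Hy. apply Hb in Hy. lra.
  - now rewrite Ropp_involutive.
Qed.

Lemma inf_R_greatest (E : R -> Prop) (c x : R) :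
  E x -> (forall y, E y -> c <= y) -> c <= inf_R E.
Proof.
  intros Hx Hb. unfold inf_R.
  assert (sup_R (fun z => E (- z)) <= - c); [|lra].
  apply (sup_R_least _ _ (- x)).
  - now rewrite Ropp_involutive.
  - intros y Hy. apply Hb in Hy. lra.
Qed.

(** * The correction term of [Lambda] *)

Definition run_inf (f : R -> R) (s t : R) : R :=
  inf_R (fun z => exists u, s <= u <= t /\ z = f u).

Definition excess (a x : R) : R := Rmax (x - a) 0.

Definition candidate (a : R) (f : R -> R) (s t : R) : R :=
  Rmin (excess a (f s)) (run_inf f s t).

Definition correction (a : R) (f : R -> R) (t : R) : R :=
  sup_R (fun y => exists s, 0 <= s <= t /\ y = candidate a f s t).

Lemma Lambda_correction (a : R) (f : R -> R) (t : R) :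
  Lambda a f t = f t - correction a f t.
Proof. reflexivity. Qed.

(* The candidate at [s = t]: it bounds the correction from below. *)
Definition diagonal (a x : R) : R := Rmin (excess a x) x.

Lemma excess_mono (a x y : R) : x <= y -> excess a x <= excess a y.
Proof. unfold excess; intros; minmax. Qed.

Lemma excess_shift (a x e : R) : 0 <= e -> excess a x - e <= excess a (x - e).
Proof. unfold excess; intros; minmax. Qed.

Lemma diagonal_lipschitz (a x y : R) : x <= y -> diagonal a y - diagonal a x <= y - x.
Proof. unfold diagonal, excess; intros; minmax. Qed.

(* [f] is bounded by [B] on [[0,t]]; it makes every sup and inf above finite. *)
Definition bounded_by (f : R -> R) (t B : R) : Prop :=
  forall u, 0 <= u <= t -> Rabs (f u) <= B.

Lemma bounded_by_mono (f : R -> R) (t t' B : R) :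
  bounded_by f t B -> t' <= t -> bounded_by f t' B.
Proof. intros H Ht u Hu. apply H. lra. Qed.

Section Correction.
Variables (a : R) (f : R -> R).

Lemma run_inf_le (t B s u : R) :
  bounded_by f t B -> 0 <= s -> s <= u <= t -> run_inf f s t <= f u.
Proof.
  intros HB Hs Hu. apply (inf_R_lower _ (- B)); [|now exists u].
  intros y [v [Hv ->]]. assert (Rabs (f v) <= B) by (apply HB; lra). absolute.
Qed.

Lemma run_inf_ge (s t c : R) :
  s <= t -> (forall u, s <= u <= t -> c <= f u) -> c <= run_inf f s t.
Proof.
  intros Hst H. apply (inf_R_greatest _ _ (f s)).
  - exists s. split; [lra|auto].
  - intros y [u [Hu ->]]; auto.
Qed.

Lemma run_inf_point (t B : R) : bounded_by f t B -> 0 <= t -> run_inf f t t = f t.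
Proof.
  intros HB Ht. apply Rle_antisym.
  - apply (run_inf_le t B); auto; lra.
  - apply run_inf_ge; [lra|]. intros u Hu. replace u with t by lra. lra.
Qed.

Lemma candidate_le_end (t B s : R) :
  bounded_by f t B -> 0 <= s <= t -> candidate a f s t <= f t.
Proof.
  intros HB Hs. pose proof (run_inf_le t B s t HB ltac:(lra) ltac:(lra)).
  unfold candidate. minmax.
Qed.

Lemma correction_ge (t B s : R) :
  bounded_by f t B -> 0 <= s <= t -> candidate a f s t <= correction a f t.
Proof.
  intros HB Hs. apply (sup_R_upper _ B); [|now exists s].
  intros y [v [Hv ->]].
  pose proof (run_inf_le t B v v HB ltac:(lra) ltac:(lra)).
  assert (Rabs (f v) <= B) by (apply HB; lra).
  unfold candidate in *. minmax; absolute.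
Qed.

Lemma correction_le (t c : R) :
  0 <= t -> (forall s, 0 <= s <= t -> candidate a f s t <= c) -> correction a f t <= c.
Proof.
  intros Ht H. apply (sup_R_least _ _ (candidate a f t t)).
  - exists t. split; [lra|auto].
  - intros y [s [Hs ->]]; auto.
Qed.

Lemma correction_ge_diagonal (t B : R) :
  bounded_by f t B -> 0 <= t -> diagonal a (f t) <= correction a f t.
Proof.
  intros HB Ht. pose proof (correction_ge t B t HB ltac:(lra)) as H.
  unfold candidate in H. rewrite (run_inf_point t B) in H; auto.
Qed.

Lemma correction_le_value (t B : R) :
  bounded_by f t B -> 0 <= t -> correction a f t <= f t.
Proof. intros. apply correction_le; auto. intros. apply (candidate_le_end t B); auto. Qed.

Lemma correction_lower (s s2 B c : R) :
  bounded_by f s2 B -> 0 <= s <= s2 -> (forall u, s <= u <= s2 -> c <= f u) ->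
  Rmin (correction a f s) c <= correction a f s2.
Proof.
  intros HB Hs Hc.
  destruct (Rle_dec c (correction a f s2)) as [H|H].
  { pose proof (Rmin_r (correction a f s) c). lra. }
  assert (correction a f s <= correction a f s2).
  { apply correction_le; [lra|]. intros s' Hs'.
    assert (HB' : bounded_by f s B) by (apply (bounded_by_mono _ s2); auto; lra).
    pose proof (correction_ge s2 B s' HB ltac:(lra)).
    assert (Rmin (run_inf f s' s) c <= run_inf f s' s2).
    { apply run_inf_ge; [lra|]. intros u Hu. destruct (Rle_dec u s).
      - pose proof (run_inf_le s B s' u HB' ltac:(lra) ltac:(lra)).
        pose proof (Rmin_l (run_inf f s' s) c). lra.
      - pose proof (Hc u ltac:(lra)). pose proof (Rmin_r (run_inf f s' s) c). lra. }
    unfold candidate in *. minmax. }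
  pose proof (Rmin_l (correction a f s) c). lra.
Qed.

Lemma correction_upper (s1 s2 B c : R) :
  bounded_by f s2 B -> 0 <= s1 <= s2 -> (forall u, s1 <= u <= s2 -> f u <= c) ->
  correction a f s2 <= Rmax (correction a f s1) (diagonal a c).
Proof.
  intros HB Hs Hc. apply correction_le; [lra|]. intros s' Hs'.
  assert (HB' : bounded_by f s1 B) by (apply (bounded_by_mono _ s2); auto; lra).
  pose proof (Rmax_l (correction a f s1) (diagonal a c)).
  pose proof (Rmax_r (correction a f s1) (diagonal a c)).
  destruct (Rle_dec s' s1).
  - assert (run_inf f s' s2 <= run_inf f s' s1).
    { apply run_inf_ge; [lra|]. intros u Hu. apply (run_inf_le s2 B); auto; lra. }
    pose proof (correction_ge s1 B s' HB' ltac:(lra)).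
    assert (candidate a f s' s2 <= candidate a f s' s1) by (unfold candidate; minmax).
    lra.
  - pose proof (candidate_le_end s2 B s' HB ltac:(lra)).
    pose proof (excess_mono a (f s') c (Hc s' ltac:(lra))).
    pose proof (Hc s2 ltac:(lra)).
    assert (candidate a f s' s2 <= diagonal a c) by (unfold candidate, diagonal in *; minmax).
    lra.
Qed.

Lemma Lambda_le_at_max (s s2 B : R) :
  bounded_by f s2 B -> 0 <= s <= s2 -> (forall u, s <= u <= s2 -> f u <= f s2) ->
  Lambda a f s <= Lambda a f s2.
Proof.
  intros HB Hs Hc. rewrite !Lambda_correction.
  assert (HB' : bounded_by f s B) by (apply (bounded_by_mono _ s2); auto; lra).
  pose proof (correction_upper s s2 B (f s2) HB Hs Hc).
  pose proof (correction_ge_diagonal s B HB' ltac:(lra)).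
  pose proof (diagonal_lipschitz a (f s) (f s2) (Hc s ltac:(lra))).
  pose proof (Hc s ltac:(lra)). minmax.
Qed.

Lemma Lambda_ge_at_min (s s2 B : R) :
  bounded_by f s2 B -> 0 <= s <= s2 -> (forall u, s <= u <= s2 -> f s2 <= f u) ->
  Lambda a f s2 <= Lambda a f s.
Proof.
  intros HB Hs Hc. rewrite !Lambda_correction.
  assert (HB' : bounded_by f s B) by (apply (bounded_by_mono _ s2); auto; lra).
  pose proof (correction_lower s s2 B (f s2) HB Hs Hc).
  pose proof (correction_le_value s B HB' ltac:(lra)).
  pose proof (Hc s ltac:(lra)). minmax.
Qed.

Lemma correction_oscillation (s1 s2 B w : R) :
  bounded_by f s2 B -> 0 <= s1 <= s2 -> 0 <= w ->
  (forall u, s1 <= u <= s2 -> Rabs (f u - f s1) <= w) ->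
  Rabs (correction a f s2 - correction a f s1) <= w.
Proof.
  intros HB Hs Hw Hc.
  assert (HB' : bounded_by f s1 B) by (apply (bounded_by_mono _ s2); auto; lra).
  pose proof (correction_lower s1 s2 B (f s1 - w) HB Hs
                ltac:(intros u Hu; specialize (Hc u Hu); absolute)).
  pose proof (correction_upper s1 s2 B (f s1 + w) HB Hs
                ltac:(intros u Hu; specialize (Hc u Hu); absolute)).
  pose proof (correction_le_value s1 B HB' ltac:(lra)).
  pose proof (correction_ge_diagonal s1 B HB' ltac:(lra)).
  pose proof (diagonal_lipschitz a (f s1) (f s1 + w) ltac:(lra)).
  minmax; absolute.
Qed.

Lemma Lambda_cont_01 (B : R) : cont_01 f -> bounded_by f 1 B -> cont_01 (Lambda a f).
Proof.
  intros Hf HB s Hs eps Heps.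
  destruct (Hf s Hs (eps / 8) ltac:(lra)) as [del [Hdel Hd]].
  exists del; split; auto. intros s' Hs' Hss'.
  set (lo := Rmin s s'). set (hi := Rmax s s').
  assert (Hlo : 0 <= lo /\ lo <= hi /\ hi <= 1) by (unfold lo, hi; minmax).
  assert (Hclose : forall u, lo <= u <= hi -> Rabs (f u - f s) < eps / 8).
  { intros u Hu. apply Hd; unfold lo, hi in Hu; minmax; absolute. }
  assert (Hw : forall u, lo <= u <= hi -> Rabs (f u - f lo) <= eps / 4).
  { intros u Hu. pose proof (Hclose u Hu). pose proof (Hclose lo ltac:(lra)). absolute. }
  pose proof (correction_oscillation lo hi B (eps / 4)
                ltac:(apply (bounded_by_mono _ 1); auto; lra) ltac:(lra) ltac:(lra) Hw).
  pose proof (Hw hi ltac:(lra)).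
  rewrite !Lambda_correction.
  assert (Hends : (lo = s /\ hi = s') \/ (lo = s' /\ hi = s)) by (unfold lo, hi; minmax).
  destruct Hends as [[-> ->]|[-> ->]]; absolute.
Qed.

End Correction.

(* Extending [f] constantly outside [[0,1]] gives a function continuous on all of
   [R], to which the extreme and intermediate value theorems of [Reals] apply. *)
Definition clamp01 (x : R) : R := Rmax 0 (Rmin 1 x).

Lemma clamp01_range (x : R) : 0 <= clamp01 x <= 1.
Proof. unfold clamp01; minmax. Qed.

Lemma clamp01_id (x : R) : 0 <= x <= 1 -> clamp01 x = x.
Proof. unfold clamp01; intros; minmax. Qed.

Lemma clamp01_contraction (x y : R) : Rabs (clamp01 y - clamp01 x) <= Rabs (y - x).
Proof. unfold clamp01; minmax; absolute. Qed.

Lemma cont_01_clamp (f : R -> R) : cont_01 f -> continuity (fun y => f (clamp01 y)).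
Proof.
  intros Hf x. unfold continuity_pt, continue_in, limit1_in, limit_in.
  intros eps Heps. destruct (Hf (clamp01 x) (clamp01_range x) eps Heps) as [del [Hdel Hd]].
  exists del; split; auto. intros y [_ Hy]. simpl in *. unfold R_dist in *.
  apply Hd; [apply clamp01_range|]. pose proof (clamp01_contraction x y). lra.
Qed.

Lemma cont_01_bounded (f : R -> R) : cont_01 f -> exists B, bounded_by f 1 B.
Proof.
  intros Hf. pose proof (cont_01_clamp f Hf) as Hc.
  destruct (continuity_ab_maj (fun y => f (clamp01 y)) 0 1 ltac:(lra) (fun c _ => Hc c))
    as [M [HM _]].
  destruct (continuity_ab_min (fun y => f (clamp01 y)) 0 1 ltac:(lra) (fun c _ => Hc c))
    as [m [Hm _]].
  exists (Rmax (Rabs (f (clamp01 M))) (Rabs (f (clamp01 m)))).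
  intros u Hu. specialize (HM u Hu). specialize (Hm u Hu). simpl in *.
  rewrite (clamp01_id u Hu) in HM, Hm. minmax; absolute.
Qed.

Lemma left_val_zero (f : R -> R) : left_val f 0 = f 0.
Proof. unfold left_val. destruct (Req_EM_T 0 0); [reflexivity|lra]. Qed.

Lemma left_val_is_lim (f : R -> R) (t : R) :
  t <> 0 -> (exists l, is_left_lim f t l) -> is_left_lim f t (left_val f t).
Proof.
  intros Ht He. unfold left_val. destruct (Req_EM_T t 0); [lra|].
  destruct (excluded_middle_informative (exists l, is_left_lim f t l)) as [H|H]; [|tauto].
  exact (proj2_sig (constructive_indefinite_description _ H)).
Qed.

Lemma cadlag_left_val (T : R) (f : R -> R) (t : R) :
  cadlag T f -> 0 < t <= T -> is_left_lim f t (left_val f t).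
Proof. intros [_ Hc] Ht. apply left_val_is_lim; [lra|]. apply Hc; auto. Qed.

Lemma left_lim_ge (f : R -> R) (t t' L m : R) :
  is_left_lim f t L -> t' < t -> (forall s, t' <= s < t -> m <= f s) -> m <= L.
Proof.
  intros HL Ht Hm. destruct (Rle_dec m L) as [|Hn]; auto. exfalso.
  destruct (HL (m - L) ltac:(lra)) as [d [Hd Hs]].
  set (s := Rmax t' (t - d / 2)).
  assert (t' <= s < t /\ t - d < s) by (unfold s; minmax).
  specialize (Hs s ltac:(lra)). specialize (Hm s ltac:(lra)). absolute.
Qed.

Lemma left_lim_unique (f : R -> R) (t l1 l2 : R) :
  is_left_lim f t l1 -> is_left_lim f t l2 -> l1 = l2.
Proof.
  intros H1 H2. destruct (Req_dec l1 l2) as [|Hn]; auto. exfalso.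
  assert (He : Rabs (l1 - l2) > 0) by (apply Rabs_pos_lt; lra).
  destruct (H1 (Rabs (l1 - l2) / 2) ltac:(lra)) as [d1 [Hd1 Hs1]].
  destruct (H2 (Rabs (l1 - l2) / 2) ltac:(lra)) as [d2 [Hd2 Hs2]].
  set (s := t - Rmin d1 d2 / 2).
  assert (t - d1 < s < t /\ t - d2 < s < t) by (unfold s; minmax).
  specialize (Hs1 s ltac:(lra)). specialize (Hs2 s ltac:(lra)). absolute.
Qed.

(** * Elementary properties of a parametric representation [(r,g) ∈ Π(φ)] *)

Section Representation.
Variables (T : R) (phi r g : R -> R).
Hypothesis HP : in_Pi T phi r g.

Lemma r_range (s : R) : 0 <= s <= 1 -> 0 <= r s <= T.
Proof. destruct HP as (_ & _ & Hin & _). intros Hs. apply (Hin s Hs). Qed.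

Lemma g_in_segment (s : R) : 0 <= s <= 1 ->
  Rmin (left_val phi (r s)) (phi (r s)) <= g s <= Rmax (left_val phi (r s)) (phi (r s)).
Proof. destruct HP as (_ & _ & Hin & _). intros Hs. apply (Hin s Hs). Qed.

Lemma r_mono (s1 s2 : R) : 0 <= s1 -> s1 <= s2 -> s2 <= 1 -> r s1 <= r s2.
Proof.
  destruct HP as (_ & _ & _ & _ & Hm). intros H1 H2 H3.
  destruct (Hm s1 s2 ltac:(lra) ltac:(lra) H2) as [H|[H _]]; lra.
Qed.

Lemma r_lt_inv (s1 s2 : R) : 0 <= s1 <= 1 -> 0 <= s2 <= 1 -> r s1 < r s2 -> s1 < s2.
Proof.
  intros H1 H2 H. destruct (Rlt_le_dec s1 s2) as [|Hle]; auto.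
  pose proof (r_mono s2 s1 ltac:(lra) Hle ltac:(lra)). lra.
Qed.

Lemma fiber_order (s1 s2 : R) : 0 <= s1 -> s1 <= s2 -> s2 <= 1 -> r s1 = r s2 ->
  Rabs (left_val phi (r s1) - g s1) <= Rabs (left_val phi (r s1) - g s2).
Proof.
  destruct HP as (_ & _ & _ & _ & Hm). intros H1 H2 H3 He.
  destruct (Hm s1 s2 ltac:(lra) ltac:(lra) H2) as [H|[_ H]]; lra.
Qed.

Lemma graph_point_hit (t : R) : 0 <= t <= T ->
  exists s, 0 <= s <= 1 /\ r s = t /\ g s = phi t.
Proof.
  destruct HP as (_ & _ & _ & Hs & _). intros Ht.
  destruct (Hs t (phi t)) as [s [H1 [H2 H3]]].
  { split; auto. split; [apply Rmin_r | apply Rmax_r]. }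
  exists s; auto.
Qed.

Lemma stays_at_value (sh s : R) : 0 <= sh -> sh <= s -> s <= 1 -> r s = r sh ->
  g sh = phi (r sh) -> g s = phi (r s).
Proof.
  intros H1 H2 H3 He Hh.
  pose proof (fiber_order sh s H1 H2 H3 (eq_sym He)).
  pose proof (g_in_segment s ltac:(lra)). rewrite He in *. rewrite Hh in *.
  set (L := left_val phi (r sh)) in *. minmax; absolute.
Qed.

Lemma graph_point_hit_after (s : R) : 0 <= s <= 1 ->
  exists sh, s <= sh <= 1 /\ r sh = r s /\ g sh = phi (r s).
Proof.
  intros Hs. destruct (graph_point_hit (r s) (r_range s Hs)) as [sh [Hsh [Hrh Hgh]]].
  destruct (Rle_dec s sh).
  - exists sh. repeat split; auto; lra.
  - exists s. repeat split; try lra.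
    apply (stays_at_value sh s); try lra; congruence.
Qed.

Lemma r_start : r 0 = 0.
Proof.
  pose proof (r_range 0 ltac:(lra)).
  destruct (graph_point_hit 0 ltac:(lra)) as [s [Hs [Hr _]]].
  pose proof (r_mono 0 s ltac:(lra) ltac:(lra) ltac:(lra)). lra.
Qed.

Lemma graph_point_hit_before (s tau : R) : 0 <= s <= 1 -> g s = phi (r s) ->
  0 <= tau <= r s -> exists u, 0 <= u <= s /\ r u = tau /\ g u = phi tau.
Proof.
  intros Hs Hg Ht. pose proof (r_range s Hs).
  destruct (graph_point_hit tau ltac:(lra)) as [s1 [Hs1 [Hr1 Hg1]]].
  destruct (Rle_dec s1 s).
  - exists s1. repeat split; auto; lra.
  - pose proof (r_mono s s1 ltac:(lra) ltac:(lra) ltac:(lra)).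
    exists s. repeat split; try lra. replace tau with (r s) by lra. exact Hg.
Qed.

(* Each fibre of [r] has a first parameter, the supremum of [{s | r s < t}]. *)
Lemma fiber_first (t : R) : 0 <= t <= T ->
  exists sm, 0 <= sm <= 1 /\ r sm = t /\ forall s, 0 <= s <= 1 -> r s = t -> sm <= s.
Proof.
  intros Ht. destruct (Req_dec t 0) as [->|Htn].
  { exists 0. repeat split; try lra; [apply r_start|]. intros s Hs _; lra. }
  set (E := fun x => 0 <= x <= 1 /\ r x < t).
  assert (HE : is_lub E (sup_R E)).
  { apply (sup_R_is_lub E 1); [exists 0; split; [lra|rewrite r_start; lra]|].
    intros x [Hx _]; lra. }
  set (c := sup_R E) in *. destruct HE as [Hub Hl].
  destruct (graph_point_hit t Ht) as [sh [Hsh [Hrh _]]].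
  assert (Hup : forall s, 0 <= s <= 1 -> r s = t -> is_upper_bound E s).
  { intros s Hs Hrs x [Hx Hrx]. left. apply r_lt_inv; auto; lra. }
  assert (Hc0 : 0 <= c) by (apply Hub; split; [lra|rewrite r_start; lra]).
  assert (Hcsh : c <= sh) by (apply Hl; apply Hup; auto).
  exists c. split; [lra|]. split.
  - pose proof (r_mono c sh Hc0 Hcsh ltac:(lra)).
    destruct (Rle_lt_or_eq_dec (r c) t ltac:(lra)) as [Hlt|]; auto. exfalso.
    destruct HP as (Hr & _).
    destruct (Hr c ltac:(lra) (t - r c) ltac:(lra)) as [d [Hd Hdd]].
    destruct (Req_dec c 1) as [Hc1|Hc1].
    { assert (sh = 1) by lra. subst sh. rewrite Hc1 in Hlt. lra. }
    set (x := Rmin 1 (c + d / 2)).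
    assert (Hx : c < x <= 1 /\ Rabs (x - c) < d) by (unfold x; minmax; absolute).
    specialize (Hdd x ltac:(lra) ltac:(lra)).
    assert (HEx : E x) by (split; [lra|absolute]).
    specialize (Hub x HEx). lra.
  - intros s Hs Hrs. apply Hl. apply Hup; auto.
Qed.

(* A bound for [g] on [[0,1]] bounds [φ] on [[0,T]], since [φ]'s values are among [g]'s. *)
Lemma phi_bounded (B : R) : bounded_by g 1 B -> bounded_by phi T B.
Proof.
  intros HB u Hu. destruct (graph_point_hit u Hu) as [s [Hs [_ Hg]]].
  rewrite <- Hg. apply HB. lra.
Qed.

End Representation.

(** * The key identity: [Λ_a] commutes with the parametrisation

   The jumps of [φ] are traversed by [g] monotonically between
   [φ(t-)] and [φ t], so they contribute no new running infima ([≤]); and a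
   candidate of [g] taken inside a jump is approached by candidates of [φ] taken
   just before the jump, thanks to the existence of left limits ([≥]). *)

Section KeyIdentity.
Variables (a T : R) (phi r g : R -> R) (B : R).
Hypothesis Hcad : cadlag T phi.
Hypothesis HP : in_Pi T phi r g.
Hypothesis HB : bounded_by g 1 B.

Lemma run_inf_phi_le_g (t s s2 u : R) :
  0 <= s2 <= s -> s <= 1 -> r s = t -> r s2 <= t -> g s2 = phi (r s2) -> s2 <= u <= s ->
  run_inf phi (r s2) t <= g u.
Proof.
  intros Hs2 Hs Hr Ht' Hg2 Hu.
  pose proof (r_range T phi r g HP s ltac:(lra)).
  assert (HBp : bounded_by phi t B).
  { apply (bounded_by_mono _ T); [apply (phi_bounded T phi r g HP); auto | lra]. }
  pose proof (r_range T phi r g HP s2 ltac:(lra)).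
  pose proof (r_mono T phi r g HP s2 u ltac:(lra) ltac:(lra) ltac:(lra)).
  pose proof (r_mono T phi r g HP u s ltac:(lra) ltac:(lra) ltac:(lra)).
  set (m := run_inf phi (r s2) t).
  destruct (Req_dec (r u) (r s2)) as [Eq|Ne].
  - rewrite (stays_at_value T phi r g HP s2 u) by (auto; lra).
    rewrite Eq. apply (run_inf_le phi t B); auto; lra.
  - set (tau := r u) in *.
    pose proof (g_in_segment T phi r g HP u ltac:(lra)) as Hseg. fold tau in Hseg.
    assert (m <= phi tau) by (apply (run_inf_le phi t B); auto; lra).
    assert (m <= left_val phi tau).
    { apply (left_lim_ge phi tau (r s2)); [apply (cadlag_left_val T); auto; lra | lra |].
      intros v Hv. apply (run_inf_le phi t B); auto; lra. }
    minmax.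
Qed.

Lemma correction_phi_le_g (t s : R) :
  0 <= s <= 1 -> r s = t -> g s = phi t -> correction a phi t <= correction a g s.
Proof.
  intros Hs Hr Hg. pose proof (r_range T phi r g HP s Hs).
  apply correction_le; [lra|]. intros t' Ht'.
  destruct (graph_point_hit_before T phi r g HP s t' Hs ltac:(congruence) ltac:(lra))
    as [s2 [Hs2 [Hr2 Hg2]]].
  assert (Hinf : run_inf phi t' t <= run_inf g s2 s).
  { apply run_inf_ge; [lra|]. intros u Hu. rewrite <- Hr2.
    apply (run_inf_phi_le_g t s s2 u); auto; try lra; congruence. }
  pose proof (correction_ge a g s B s2 (bounded_by_mono g 1 s B HB ltac:(lra)) ltac:(lra)).
  assert (candidate a phi t' t <= candidate a g s2 s) by (unfold candidate; rewrite Hg2; minmax).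
  lra.
Qed.

Lemma run_inf_g_le_phi (s s' tau : R) :
  0 <= s' <= s -> s <= 1 -> g s = phi (r s) -> r s' <= tau <= r s ->
  (tau = r s' -> g s' <> phi tau) -> run_inf g s' s <= phi tau.
Proof.
  intros Hs' Hs Hg Htau Hjump.
  destruct (graph_point_hit_before T phi r g HP s tau ltac:(lra) Hg
              ltac:(pose proof (r_range T phi r g HP s' ltac:(lra)); lra))
    as [u [Hu [Hru Hgu]]].
  assert (s' <= u).
  { destruct (Rle_dec s' u) as [|Hlt]; auto. exfalso.
    pose proof (r_mono T phi r g HP u s' ltac:(lra) ltac:(lra) ltac:(lra)).
    assert (Heq : r s' = r u) by lra.
    apply Hjump; [lra|]. rewrite <- Hru, <- Heq.
    apply (stays_at_value T phi r g HP u s'); auto; try lra. congruence. }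
  rewrite <- Hgu. apply (run_inf_le g s B); [apply (bounded_by_mono _ 1); auto|..]; lra.
Qed.

Lemma approximating_time (t s s' eps : R) :
  0 <= s' <= s -> s <= 1 -> r s = t -> g s = phi t -> eps > 0 ->
  exists tau, 0 <= tau <= t /\ g s' - eps <= phi tau /\
    Rmin (g s' - eps) (run_inf g s' s) <= run_inf phi tau t.
Proof.
  intros Hs' Hs Hr Hg Heps.
  set (t' := r s'). set (z := g s'). set (Mg := run_inf g s' s).
  assert (Ht' : 0 <= t' <= t).
  { pose proof (r_range T phi r g HP s' ltac:(lra)).
    pose proof (r_mono T phi r g HP s' s ltac:(lra) ltac:(lra) ltac:(lra)). unfold t'; lra. }
  assert (Hlater : forall tau, t' <= tau <= t -> (tau = t' -> z <> phi tau) -> Mg <= phi tau).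
  { intros tau Htau Hj. unfold t', z, Mg in *.
    apply run_inf_g_le_phi; auto; try lra; congruence. }
  destruct (Rle_dec z (phi t')) as [Hzp|Hzp].
  - exists t'. split; [lra|]. split; [lra|].
    apply run_inf_ge; [lra|]. intros tau Htau.
    destruct (Req_dec tau t') as [->|Hne]; [minmax|].
    pose proof (Hlater tau Htau ltac:(lra)). minmax.
  - (* [g s'] lies inside a jump, hence below [φ(t'-)]; go slightly before [t']. *)
    pose proof (g_in_segment T phi r g HP s' ltac:(lra)) as Hseg. fold t' z in Hseg.
    assert (Hz : z <= left_val phi t') by minmax.
    assert (Ht0 : t' <> 0) by (intro E; rewrite E, left_val_zero in Hz; rewrite E in Hzp; lra).
    destruct (cadlag_left_val T phi t' Hcad ltac:(pose proof (r_range T phi r g HP s); lra)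
                eps Heps) as [d [Hd Hnear]].
    set (t'' := Rmax (t' / 2) (t' - d / 2)).
    assert (Ht'' : 0 <= t'' < t' /\ t' - d < t'') by (unfold t''; minmax).
    exists t''. split; [lra|]. split.
    { pose proof (Hnear t'' ltac:(lra)). absolute. }
    apply run_inf_ge; [lra|]. intros tau Htau.
    destruct (Rlt_le_dec tau t').
    + pose proof (Hnear tau ltac:(lra)). minmax; absolute.
    + pose proof (Hlater tau ltac:(lra) ltac:(intros ->; lra)). minmax.
Qed.

Lemma correction_g_le_phi (t s : R) :
  0 <= s <= 1 -> r s = t -> g s = phi t -> correction a g s <= correction a phi t.
Proof.
  intros Hs Hr Hg. pose proof (r_range T phi r g HP s Hs) as Ht. rewrite Hr in Ht.
  assert (HBp : bounded_by phi t B).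
  { apply (bounded_by_mono _ T); [apply (phi_bounded T phi r g HP); auto | lra]. }
  apply correction_le; [lra|]. intros s' Hs'.
  apply le_epsilon. intros eps Heps.
  destruct (approximating_time t s s' eps ltac:(lra) ltac:(lra) Hr Hg Heps)
    as [tau [Htau [Hval Hinf]]].
  pose proof (correction_ge a phi t B tau HBp Htau).
  pose proof (run_inf_le g s B s' s' (bounded_by_mono g 1 s B HB ltac:(lra))
                ltac:(lra) ltac:(lra)).
  pose proof (excess_mono a _ _ Hval).
  pose proof (excess_shift a (g s') eps ltac:(lra)).
  unfold candidate in *. minmax.
Qed.

Lemma Lambda_on_graph (t s : R) :
  0 <= s <= 1 -> r s = t -> g s = phi t -> Lambda a phi t = Lambda a g s.
Proof.
  intros Hs Hr Hg. rewrite !Lambda_correction, Hg.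
  pose proof (correction_phi_le_g t s Hs Hr Hg).
  pose proof (correction_g_le_phi t s Hs Hr Hg). lra.
Qed.

End KeyIdentity.

(** * [(r, Λ_a g)] represents the completed graph of [Λ_a φ] *)

Section LambdaRepresentation.
Variables (a T : R) (phi r g : R -> R) (B : R).
Hypothesis Hcad : cadlag T phi.
Hypothesis HP : in_Pi T phi r g.
Hypothesis HB : bounded_by g 1 B.

(* Along a fibre of [r], [Λ_a g] moves in the direction of the jump of [φ]:
   [g] is a running maximum (resp. minimum) there. *)
Lemma Lambda_fiber_mono (s1 s2 : R) : 0 <= s1 -> s1 <= s2 -> s2 <= 1 -> r s1 = r s2 ->
  (left_val phi (r s2) <= phi (r s2) -> Lambda a g s1 <= Lambda a g s2) /\
  (phi (r s2) <= left_val phi (r s2) -> Lambda a g s2 <= Lambda a g s1).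
Proof.
  intros H1 H12 H2 Hr.
  assert (Hfib : forall u, s1 <= u <= s2 -> r u = r s2).
  { intros u Hu. pose proof (r_mono T phi r g HP s1 u ltac:(lra) ltac:(lra) ltac:(lra)).
    pose proof (r_mono T phi r g HP u s2 ltac:(lra) ltac:(lra) ltac:(lra)). lra. }
  assert (HB2 : bounded_by g s2 B) by (apply (bounded_by_mono _ 1); auto).
  pose proof (g_in_segment T phi r g HP s2 ltac:(lra)).
  split; intro Hjump.
  - apply (Lambda_le_at_max a g s1 s2 B HB2 ltac:(lra)). intros u Hu.
    pose proof (fiber_order T phi r g HP u s2 ltac:(lra) ltac:(lra) H2 (Hfib u Hu)).
    pose proof (g_in_segment T phi r g HP u ltac:(lra)). rewrite (Hfib u Hu) in *.
    minmax; absolute.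
  - apply (Lambda_ge_at_min a g s1 s2 B HB2 ltac:(lra)). intros u Hu.
    pose proof (fiber_order T phi r g HP u s2 ltac:(lra) ltac:(lra) H2 (Hfib u Hu)).
    pose proof (g_in_segment T phi r g HP u ltac:(lra)). rewrite (Hfib u Hu) in *.
    minmax; absolute.
Qed.

(* The left limit of [Λ_a φ] at [t] is the value of [Λ_a g] at the first
   parameter [sm] of the fibre over [t]: approach [sm] from the left along
   graph points, on which [Λ_a φ] and [Λ_a g] agree, and use continuity. *)
Lemma Lambda_left_val (t sm : R) : 0 <= t <= T -> 0 <= sm <= 1 -> r sm = t ->
  (forall s, 0 <= s <= 1 -> r s = t -> sm <= s) ->
  left_val (Lambda a phi) t = Lambda a g sm.
Proof.
  intros Ht Hsm Hrsm Hfirst.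
  destruct (graph_point_hit T phi r g HP t Ht) as [sh [Hsh [Hrh Hgh]]].
  pose proof (Hfirst sh Hsh Hrh) as Hle.
  destruct (Req_dec t 0) as [E0|Hn].
  - rewrite E0 in *. rewrite left_val_zero, (Lambda_on_graph a T phi r g B Hcad HP HB 0 sh); auto.
    destruct (Lambda_fiber_mono sm sh ltac:(lra) Hle ltac:(lra) ltac:(congruence)) as [Hu Hd].
    rewrite Hrh, left_val_zero in Hu, Hd.
    pose proof (Hu (Rle_refl _)). pose proof (Hd (Rle_refl _)). lra.
  - assert (HL : is_left_lim (Lambda a phi) t (Lambda a g sm)).
    { intros eps Heps.
      destruct (Lambda_cont_01 a g B (proj1 (proj2 HP)) HB sm Hsm eps Heps) as [e [He Hce]].
      pose proof (r_start T phi r g HP).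
      assert (Hsm0 : 0 < sm) by (destruct (Req_dec sm 0) as [E|]; [rewrite E in Hrsm; lra | lra]).
      set (sg := Rmax 0 (sm - e / 2)).
      assert (Hsg : 0 <= sg < sm /\ sm - e < sg) by (unfold sg; minmax).
      assert (Hrsg : r sg < t).
      { pose proof (r_mono T phi r g HP sg sm ltac:(lra) ltac:(lra) ltac:(lra)).
        destruct (Req_dec (r sg) t) as [E|]; [|lra]. pose proof (Hfirst sg ltac:(lra) E). lra. }
      pose proof (r_range T phi r g HP sg ltac:(lra)).
      exists (t - r sg). split; [lra|]. intros t' Ht'.
      destruct (graph_point_hit T phi r g HP t' ltac:(lra)) as [s1 [Hs1 [Hr1 Hg1]]].
      rewrite (Lambda_on_graph a T phi r g B Hcad HP HB t' s1); auto.
      assert (s1 < sm) by (apply (r_lt_inv T phi r g HP); auto; lra).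
      assert (sg <= s1).
      { destruct (Rle_dec sg s1); auto.
        pose proof (r_mono T phi r g HP s1 sg ltac:(lra) ltac:(lra) ltac:(lra)). lra. }
      apply Hce; [lra|]. absolute. }
    apply eq_sym, (left_lim_unique (Lambda a phi) t); auto.
    apply left_val_is_lim; auto. exists (Lambda a g sm); auto.
Qed.

Lemma Lambda_in_graph (s : R) : 0 <= s <= 1 -> in_G T (Lambda a phi) (r s) (Lambda a g s).
Proof.
  intros Hs. pose proof (r_range T phi r g HP s Hs) as Ht.
  destruct (fiber_first T phi r g HP (r s) Ht) as [sm [Hsm [Hrsm Hfirst]]].
  destruct (graph_point_hit_after T phi r g HP s Hs) as [sh [Hsh [Hrh Hgh]]].
  pose proof (Hfirst s Hs eq_refl) as Hsms.
  split; [exact Ht|].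
  rewrite (Lambda_on_graph a T phi r g B Hcad HP HB (r s) sh), (Lambda_left_val (r s) sm);
    auto; try lra.
  destruct (Lambda_fiber_mono sm s ltac:(lra) Hsms ltac:(lra) Hrsm) as [A1 A2].
  destruct (Lambda_fiber_mono s sh ltac:(lra) ltac:(lra) ltac:(lra) (eq_sym Hrh)) as [B1 B2].
  rewrite Hrh in B1, B2.
  destruct (Rle_dec (left_val phi (r s)) (phi (r s))) as [Hc|Hc].
  - specialize (A1 Hc). specialize (B1 Hc). minmax.
  - specialize (A2 ltac:(lra)). specialize (B2 ltac:(lra)). minmax.
Qed.

(* Surjectivity: the segment over [t] is swept by [Λ_a g] between the first
   parameter of the fibre and a graph point, by the intermediate value theorem. *)
Lemma Lambda_graph_onto (t z : R) : in_G T (Lambda a phi) t z ->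
  exists s, 0 <= s <= 1 /\ r s = t /\ Lambda a g s = z.
Proof.
  intros [Ht Hz].
  destruct (fiber_first T phi r g HP t Ht) as [sm [Hsm [Hrsm Hfirst]]].
  destruct (graph_point_hit T phi r g HP t Ht) as [sh [Hsh [Hrh Hgh]]].
  pose proof (Hfirst sh Hsh Hrh) as Hle.
  rewrite (Lambda_on_graph a T phi r g B Hcad HP HB t sh) in Hz by auto.
  rewrite (Lambda_left_val t sm) in Hz by auto.
  pose proof (cont_01_clamp _ (Lambda_cont_01 a g B (proj1 (proj2 HP)) HB)) as Hc.
  assert (Hc2 : continuity (fun x => Lambda a g (clamp01 x) - z)).
  { apply continuity_minus; auto. apply continuity_const. intros x y; reflexivity. }
  destruct (IVT_cor _ sm sh Hc2 Hle) as [x [Hx Hfx]].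
  { rewrite !clamp01_id by lra. minmax; nra. }
  rewrite clamp01_id in Hfx by lra.
  exists x. split; [lra|]. split; [|lra].
  pose proof (r_mono T phi r g HP sm x ltac:(lra) ltac:(lra) ltac:(lra)).
  pose proof (r_mono T phi r g HP x sh ltac:(lra) ltac:(lra) ltac:(lra)). lra.
Qed.

(* Order: inside a fibre, [Λ_a g] moves away from [Λ_a φ (t-) = Λ_a g sm]. *)
Lemma Lambda_graph_order (s1 s2 : R) : 0 <= s1 <= 1 -> 0 <= s2 <= 1 -> s1 <= s2 ->
  G_le (Lambda a phi) (r s1) (Lambda a g s1) (r s2) (Lambda a g s2).
Proof.
  intros Hs1 Hs2 H12.
  pose proof (r_mono T phi r g HP s1 s2 ltac:(lra) H12 ltac:(lra)) as Hr12.
  destruct (Rle_lt_or_eq_dec _ _ Hr12) as [Hlt|Heq]; [left; auto | right; split; auto].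
  pose proof (r_range T phi r g HP s1 Hs1) as Ht.
  destruct (fiber_first T phi r g HP (r s1) Ht) as [sm [Hsm [Hrsm Hfirst]]].
  pose proof (Hfirst s1 Hs1 eq_refl) as Hsms.
  rewrite (Lambda_left_val (r s1) sm) by auto.
  destruct (Lambda_fiber_mono sm s1 ltac:(lra) Hsms ltac:(lra) Hrsm) as [A1 A2].
  destruct (Lambda_fiber_mono s1 s2 ltac:(lra) H12 ltac:(lra) Heq) as [B1 B2].
  rewrite <- Heq in B1, B2.
  destruct (Rle_dec (left_val phi (r s1)) (phi (r s1))) as [Hc|Hc].
  - specialize (A1 Hc). specialize (B1 Hc). absolute.
  - specialize (A2 ltac:(lra)). specialize (B2 ltac:(lra)). absolute.
Qed.

End LambdaRepresentation.

Theorem lemmaA1 (a T : R) (phi r g : R -> R) :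
  a > 0 -> T > 0 -> cadlag T phi -> in_Pi T phi r g ->
  in_Pi T (Lambda a phi) r (Lambda a g).
Proof.
  intros _ _ Hcad HP. pose proof HP as (Hr & Hg & _).
  destruct (cont_01_bounded g Hg) as [B HB].
  split; [exact Hr|]. split; [exact (Lambda_cont_01 a g B Hg HB)|].
  split; [|split].
  - intros s Hs. eapply Lambda_in_graph; eauto.
  - intros t z Hz. eapply Lambda_graph_onto; eauto.
  - intros s1 s2 Hs1 Hs2 H12. eapply Lambda_graph_order; eauto.
Qed.
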